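(* If $n$ is odd, then $\xi=H_1+H_2+\dots+H_{n-1}$ is the unique $\{1,\dots,n-1\}$-canonical element of $\mathrm{SU}(n)$.
   Context: For $\mathrm{SU}(n)$: $E_i$ is the $n\times n$ diagonal matrix with $(i,i)$ entry $\sqrt{-1}$, others $0$; $\mathfrak t=\{\sum a_iE_i:a_i\in\mathbb R,\sum a_i=0\}$; $H_i=\frac{n-i}{n}(E_1+\dots+E_i)-\frac{i}{n}(E_{i+1}+\dots+E_n)$, $i=1,\dots,n-1$. $\mathfrak I(\mathrm{SU}(n))=\{\sum a_iE_i\in\mathfrak t: a_i\in\mathbb Z\}$. $\mathfrak I'(\mathrm{SU}(n))$ is the set of elements of $\mathfrak I(\mathrm{SU}(n))$ of the form $\sum n_iH_i$ with all $n_i\ge0$. Partial order: $\sum n_iH_i\preceq\sum n_i'H_i$ iff $n_i'\le n_i$ for all $i$. For $I\subseteq\{1,\dots,n-1\}$, $\mathfrak C_I=\{\sum n_iH_i:n_i\ge0,\ n_j>0\iff j\in I\}$; an $I$-canonical element is a maximal element of $(\mathfrak I'(\mathrm{SU}(n))\cap\mathfrak C_I,\preceq)$. *)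

From HB Require Import structures.
From mathcomp Require Import all_boot all_order all_algebra.
Set Implicit Arguments. Unset Strict Implicit. Unset Printing Implicit Defensive.
Import Order.TTheory GRing.Theory Num.Theory.
Local Open Scope ring_scope.

(* An element  sum_j a_j E_j  of the Lie algebra t of the maximal torus of
   SU(n) is represented by its coordinate row vector (a_0,...,a_{n-1}) : 'rV[R]_n
   (0-based indices; E_{j+1} <-> column j). *)

Definition in_t (R : realFieldType) (n : nat) (x : 'rV[R]_n) : Prop :=
  \sum_(j < n) x ord0 j = 0.

(* H_{i+1}, for i : 'I_n.-1 (so the paper's H_1..H_{n-1}):
   coordinate j (paper index j+1) is (n-(i+1))/n if j+1 <= i+1, else -(i+1)/n *)
Definition Hvec (R : realFieldType) (n : nat) (i : 'I_n.-1) : 'rV[R]_n :=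
  \row_(j < n) (if (j <= i)%N then (n%:R - (i.+1)%:R) / n%:R
                else - (i.+1)%:R / n%:R).

Definition comb (R : realFieldType) (n : nat) (c : 'I_n.-1 -> R) : 'rV[R]_n :=
  \sum_(i < n.-1) c i *: @Hvec R n i.

Definition in_I (R : realFieldType) (n : nat) (x : 'rV[R]_n) : Prop :=
  in_t x /\ forall j : 'I_n, exists z : int, x ord0 j = z%:~R.

Definition in_Iprime (R : realFieldType) (n : nat) (x : 'rV[R]_n) : Prop :=
  in_I x /\ exists c : 'I_n.-1 -> R, (forall i, 0 <= c i) /\ x = comb c.

Definition in_C (R : realFieldType) (n : nat) (I : {set 'I_n.-1})
  (x : 'rV[R]_n) : Prop :=
  exists c : 'I_n.-1 -> R,
    (forall i, 0 <= c i) /\ (forall i, 0 < c i <-> i \in I) /\ x = comb c.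

Definition preceq (R : realFieldType) (n : nat) (x y : 'rV[R]_n) : Prop :=
  exists c c' : 'I_n.-1 -> R,
    x = comb c /\ y = comb c' /\ forall i, c' i <= c i.

Definition canonical_elt (R : realFieldType) (n : nat) (I : {set 'I_n.-1})
  (x : 'rV[R]_n) : Prop :=
  in_Iprime x /\ in_C I x /\
  forall y, in_Iprime y -> in_C I y -> preceq x y -> y = x.

Definition xi (R : realFieldType) (n : nat) : 'rV[R]_n :=
  \sum_(i < n.-1) @Hvec R n i.

From HB Require Import structures.
From mathcomp Require Import all_boot all_order all_algebra.
From mathcomp Require Import ring lra zify.
Set Implicit Arguments. Unset Strict Implicit. Unset Printing Implicit Defensive.
Import Order.TTheory GRing.Theory Num.Theory.
Local Open Scope ring_scope.

(* Write n = m + 1.  The coordinates of  x = sum_i c_i H_i  satisfy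
   x_i - x_{i+1} = c_i, since only H_i jumps (by exactly 1) between the
   coordinates i and i+1.  Two consequences drive the proof:
   - the coefficients c are determined by x (so preceq compares the unique
     coefficient vectors), and they are integers as soon as x is integral;
     hence every element of I' cap C_{1..n-1} has all coefficients >= 1;
   - for n odd, xi has coordinates  xi_j = (n-1)/2 - j, so xi lies in t, is
     integral, and (having all coefficients equal to 1) lies in I' cap C_{1..n-1}.
   Thus xi is the greatest element of (I' cap C_{1..n-1}, preceq): it is
   maximal, and any maximal element x satisfies x preceq xi, whence x = xi. *)

Section Coordinates.
Variables (R : realFieldType) (m : nat).

Local Notation comb := (@comb R m.+1).
Local Notation in_C_full := (@in_C R m.+1 [set: 'I_m]).

Lemma comb_coord (c : 'I_m -> R) (j : 'I_m.+1) :
  comb c ord0 j = \sum_(k < m) c k * @Hvec R m.+1 k ord0 j.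
Proof. by rewrite /comb summxE; apply: eq_bigr => k _; rewrite !mxE. Qed.

Lemma comb_coord_step (c : 'I_m -> R) (i : 'I_m) :
  comb c ord0 (widen_ord (leqnSn m) i) - comb c ord0 (lift ord0 i) = c i.
Proof.
have m1_neq0 : (m.+1%:R : R) != 0 by rewrite pnatr_eq0.
rewrite !comb_coord -sumrB (bigD1 i) //= big1 ?addr0.
  by rewrite -mulrBr !mxE /= leqnn ltnn -mulrBl opprK subrK divff // mulr1.
move=> k /eqP k_neq_i; rewrite -mulrBr !mxE /= /bump /=.
have k_ne_i : nat_of_ord k <> nat_of_ord i by move/val_inj.
have -> : (i.+1 <= k)%N = (i <= k)%N by apply/idP/idP; lia.
by rewrite subrr mulr0.
Qed.

Lemma comb_inj (c c' : 'I_m -> R) : comb c = comb c' -> c =1 c'.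
Proof. by move=> e i; rewrite -comb_coord_step e comb_coord_step. Qed.

Lemma comb_coef_int (c : 'I_m -> R) :
  in_I (comb c) -> forall i, exists z : int, c i = z%:~R.
Proof.
move=> [_ int_coords] i.
have [z1 e1] := int_coords (widen_ord (leqnSn m) i).
have [z2 e2] := int_coords (lift ord0 i).
by exists (z1 - z2); rewrite intrB -e1 -e2 comb_coord_step.
Qed.

Lemma full_coef_ge1 (x : 'rV[R]_m.+1) (c : 'I_m -> R) :
  in_I x -> in_C_full x -> x = comb c -> forall i, 1 <= c i.
Proof.
move=> Ix [c' [_ [pos_c' ec']]] ex i.
have eq_c : c =1 c' by apply: comb_inj; rewrite -ex.
have [z ez] : exists z : int, c i = z%:~R by apply: comb_coef_int; rewrite -ex.
have : 0 < c i by rewrite eq_c; apply/pos_c'; rewrite in_setT.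
by rewrite ez ltr0z ler1z; lia.
Qed.

End Coordinates.

Section Xi.
Variables (R : realFieldType) (m : nat).
Hypothesis m_even : ~~ odd m.
Local Notation comb := (@comb R m.+1).
Local Notation in_C_full := (@in_C R m.+1 [set: 'I_m]).

Lemma xi_comb : xi R m.+1 = comb (fun _ : 'I_m => 1 : R).
Proof. by rewrite /xi /comb; apply: eq_bigr => i _; rewrite scale1r. Qed.

Lemma xi_in_C : in_C_full (xi R m.+1).
Proof.
exists (fun _ => 1); split=> [i|]; first exact: ler01.
by split=> [i|]; [rewrite in_setT ltr01 | exact: xi_comb].
Qed.

Lemma sum_first_even : \sum_(k < m) (k.+1)%:R = (m./2 * m.+1)%:R :> R.
Proof.
have gauss p : (\sum_(k < p) (k.+1)%:R : R) * 2 = (p * p.+1)%:R.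
  elim: p => [|p IH]; first by rewrite big_ord0 mul0r.
  by rewrite big_ord_recr /= mulrDl IH -natrM -natrD; congr (_%:R); lia.
have em : m = (m./2 + m./2)%N by rewrite addnn -[LHS]odd_double_half (negbTE m_even).
apply: (mulIf (x := 2)); first by rewrite pnatr_eq0.
by rewrite gauss -natrM; congr (_%:R); move: em; set p := m./2 => em; nia.
Qed.

Lemma count_ge (p j : nat) : \sum_(k < p) (j <= k)%N%:R = (p - j)%:R :> R.
Proof.
elim: p => [|p IH]; first by rewrite big_ord0.
by rewrite big_ord_recr /= IH -natrD; congr (_%:R); case: leqP => /=; lia.
Qed.

Lemma xi_coord (j : 'I_m.+1) : xi R m.+1 ord0 j = (m./2)%:R - (nat_of_ord j)%:R.
Proof.
have m1_neq0 : (m.+1%:R : R) != 0 by rewrite pnatr_eq0.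
have em : m = (m./2 + m./2)%N by rewrite addnn -[LHS]odd_double_half (negbTE m_even).
rewrite /xi summxE.
transitivity ((\sum_(k < m) ((j <= k)%N%:R * m.+1%:R - (k.+1)%:R)) / (m.+1%:R : R)).
  rewrite mulr_suml; apply: eq_bigr => k _; rewrite mxE /=.
  by case: leqP => _ /=; rewrite ?mul1r ?mul0r ?sub0r.
rewrite sumrB -mulr_suml count_ge sum_first_even natrM -mulrBl mulfK //.
rewrite natrB; last by rewrite -ltnS ltn_ord.
by rewrite {1}em natrD; ring.
Qed.

Lemma xi_in_I : in_I (xi R m.+1).
Proof.
split=> [|j]; last by exists ((m./2)%:Z - (nat_of_ord j)%:Z); rewrite xi_coord intrB.
rewrite /in_t; under eq_bigr => j _ do rewrite xi_coord.
rewrite sumrB sumr_const card_ord big_ord_recl add0r.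
by rewrite (eq_bigr (fun k : 'I_m => (k.+1)%:R)) // sum_first_even -mulr_natr natrM; ring.
Qed.

Lemma xi_in_Iprime : in_Iprime (xi R m.+1).
Proof.
split; first exact: xi_in_I.
by exists (fun _ => 1); split=> [i|]; [exact: ler01 | exact: xi_comb].
Qed.

Lemma full_preceq_xi (x : 'rV[R]_m.+1) :
  in_I x -> in_C_full x -> preceq x (xi R m.+1).
Proof.
move=> Ix Cx; have [c [_ [_ ex]]] := Cx.
by exists c, (fun _ => 1); split=> //; split; [exact: xi_comb | exact: full_coef_ge1 ex].
Qed.

Lemma xi_preceq_full (y : 'rV[R]_m.+1) :
  in_I y -> in_C_full y -> preceq (xi R m.+1) y -> y = xi R m.+1.
Proof.
move=> Iy Cy [c [c' [exi [ey le_c'c]]]].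
have c_eq1 : c =1 (fun _ => 1) by apply: comb_inj; rewrite -exi xi_comb.
have c'_eq1 i : c' i = 1.
  by apply/eqP; rewrite eq_le -(c_eq1 i) le_c'c (c_eq1 i) (full_coef_ge1 Iy Cy ey).
by rewrite ey xi_comb; apply: eq_bigr => i _; rewrite c'_eq1.
Qed.

End Xi.

Theorem mainTheorem11 (R : realFieldType) (n : nat) (hn : odd n) :
  canonical_elt [set: 'I_n.-1] (xi R n) /\
  (forall x : 'rV[R]_n, canonical_elt [set: 'I_n.-1] x -> x = xi R n).
Proof.
case: n hn => // m /= m_even.
split.
  split; first exact: xi_in_Iprime.
  split; first exact: xi_in_C.
  by move=> y [Iy _] Cy; exact: xi_preceq_full.
move=> x [[Ix _] [Cx x_maximal]].
symmetry; apply: x_maximal; [exact: xi_in_Iprime | exact: xi_in_C |].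
exact: full_preceq_xi.
Qed.
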